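(* Let $n\ge 1$ and $q>1$. Any optimal strategy (one of maximum success probability) for the New Hats-on-a-line Game with $q$ hat colours and $n$ players is a restricted strategy.
   Context: The New Hats-on-a-line Game with $q$ colours and $n$ players: players $P_1,\dots,P_n$ stand in a line, and each player $P_i$ receives a hat whose colour $c_i$ is chosen uniformly at random from a fixed set of $q$ colours, independently of the other hats. Player $P_i$ sees exactly the hat colours $c_{i+1},\dots,c_n$. The players respond sequentially in the order $P_1,\dots,P_n$; each response is either a colour (a guess of one's own hat colour) or ''pass'', and each player hears all previous responses. No other communication is allowed, apart from agreeing on a strategy beforehand. A strategy specifies (deterministically), for each player $P_i$, his response as a function of the colours he sees and the responses he has heard. The players win if at least one player guesses correctly and no player guesses incorrectly; the success probability of a strategy is the probability that the players win. A strategy is restricted if, for every configuration of hats $(c_1,\dots,c_n)$, any guess made by a player other than $P_1$ is correct. *)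

From mathcomp Require Import all_boot all_order all_algebra.
Set Implicit Arguments. Unset Strict Implicit. Unset Printing Implicit Defensive.
Import GRing.Theory Num.Theory.

(* Hat configurations: player i (0-indexed, P_1 is index 0) wears colour c i. *)
Definition config (n q : nat) := {ffun 'I_n -> 'I_q}.

(* A response: Some k = guess colour k, None = pass. *)
Definition response (q : nat) := option 'I_q.

(* A (deterministic) strategy: player i's response as a function of the hat
   configuration and the sequence of responses heard so far (responses of
   players 0..i-1, in order).  Admissibility below forces the dependence on
   the configuration to be only through the hats player i sees. *)
Definition strategy (n q : nat) := 'I_n -> config n q -> seq (response q) -> response q.

Definition admissible n q (s : strategy n q) : Prop :=
  forall (i : 'I_n) (c c' : config n q) (h : seq (response q)),
    (forall j : 'I_n, i < j -> c j = c' j) -> s i c h = s i c' h.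

Fixpoint history n q (s : strategy n q) (c : config n q) (k : nat) : seq (response q) :=
  match k with
  | 0 => [::]
  | k'.+1 =>
      let h := history s c k' in
      match insub k' with
      | Some i => rcons h (s i c h)
      | None => h
      end
  end.

Definition resp n q (s : strategy n q) (c : config n q) (i : 'I_n) : response q :=
  nth None (history s c n) i.

Definition wins n q (s : strategy n q) (c : config n q) : bool :=
  [exists i, resp s c i == Some (c i)] &&
  [forall i, (resp s c i != None) ==> (resp s c i == Some (c i))].

Definition success_prob n q (s : strategy n q) : rat :=
  (#|[set c : config n q | wins s c]|%:R / (#|{: config n q}|)%:R)%R.

Definition optimal n q (s : strategy n q) : Prop :=
  admissible s /\
  forall s' : strategy n q, admissible s' -> (success_prob s' <= success_prob s)%R.

Definition restricted n q (s : strategy n q) : Prop :=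
  forall (c : config n q) (i : 'I_n), 0 < i -> resp s c i != None ->
    resp s c i = Some (c i).

From mathcomp Require Import all_boot all_order all_algebra.
Set Implicit Arguments. Unset Strict Implicit. Unset Printing Implicit Defensive.
Import Order.TTheory GRing.Theory Num.Theory.

(* Given any strategy s, let P_1 pass exactly when the others, playing s with
   P_1 muted, are going to win (P_1 sees all their hats), and otherwise guess
   as in s while everybody else passes.  This wins whenever s wins.  If some
   P_i with i > 0 guesses wrongly on c under s, then s loses on all q
   configurations that differ from c only in P_1's hat, whereas the new
   strategy wins on at least one of them; so s was not optimal. *)

Lemma historyS n q (s : strategy n q) c k (Hk : k < n) :
  history s c k.+1 = rcons (history s c k) (s (Ordinal Hk) c (history s c k)).
Proof.
rewrite /=; case: insubP => [i _ Hi|]; last by rewrite Hk.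
by congr (rcons _ (s _ _ _)); apply: val_inj.
Qed.

Lemma size_history n q (s : strategy n q) c k : k <= n -> size (history s c k) = k.
Proof.
elim: k => // k IH Hk; rewrite (historyS s c Hk) size_rcons IH //.
exact: ltnW.
Qed.

Lemma nth_history n q (s : strategy n q) c k (i : 'I_n) :
  i < k -> k <= n -> nth None (history s c k) i = s i c (history s c i).
Proof.
elim: k => // k IH Hi Hk.
rewrite (historyS s c Hk) nth_rcons size_history; last exact: ltnW.
have [lt|eq|gt] := ltngtP i k.
- by rewrite (IH lt (ltnW Hk)).
- by rewrite ltnS leqNgt eq in Hi.
- by rewrite gt; congr s; apply: val_inj.
Qed.

Lemma respE n q (s : strategy n q) c (i : 'I_n) :
  resp s c i = s i c (history s c i).
Proof. exact: nth_history. Qed.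

Lemma eq_history n q (s1 s2 : strategy n q) c1 c2 :
  (forall i : 'I_n, s1 i c1 (history s1 c1 i) = s2 i c2 (history s1 c1 i)) ->
  forall k, history s1 c1 k = history s2 c2 k.
Proof.
move=> E; elim=> //= k IH; case: insubP => [i _ Hi|_]; last by rewrite IH.
by rewrite -IH -Hi E.
Qed.

Lemma eq_wins n q (s1 s2 : strategy n q) c1 c2 :
  (forall i, resp s1 c1 i = resp s2 c2 i) ->
  (forall i, resp s1 c1 i != None -> c1 i = c2 i) ->
  wins s1 c1 = wins s2 c2.
Proof.
move=> Er Ec; rewrite /wins; congr andb.
  apply: eq_existsb => i; move: (Ec i); rewrite -Er.
  by case: (resp s1 c1 i) => // r /(_ isT) ->.
apply: eq_forallb => i; move: (Ec i); rewrite -Er.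
by case: (resp s1 c1 i) => // r /(_ isT) ->.
Qed.

Lemma nth_history0 n q (s : strategy n.+1 q) c k :
  0 < k -> k <= n.+1 -> nth None (history s c k) 0 = s ord0 c [::].
Proof. exact: (@nth_history _ _ s c k ord0). Qed.

Section FirstPlayerHat.

Variables (n q : nat) (s : strategy n.+1 q).
Hypothesis adm : admissible s.
Variables c c' : config n.+1 q.
Hypothesis agree : forall j : 'I_n.+1, 0 < j -> c j = c' j.

Lemma history_indep_first k : history s c k = history s c' k.
Proof.
apply: eq_history => i; apply: adm => j ij; apply: agree.
exact: leq_ltn_trans ij.
Qed.

Lemma resp_indep_first i : resp s c i = resp s c' i.
Proof. by rewrite /resp history_indep_first. Qed.

Lemma wins_indep_first : (forall h, s ord0 c h = None) -> wins s c = wins s c'.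
Proof.
move=> pass0; apply: eq_wins => [|i]; first exact: resp_indep_first.
have [i0|ipos] := posnP i; last by rewrite agree.
by rewrite (_ : i = ord0) ?respE ?pass0 ?eqxx //; apply: val_inj.
Qed.

Lemma wrong_guess_loses_indep_first (i : 'I_n.+1) : 0 < i ->
  resp s c i != None -> resp s c i != Some (c i) -> ~~ wins s c'.
Proof.
move=> ipos guess_i wrong_i; apply/negP; rewrite /wins => /andP [_ /forallP /(_ i)].
by rewrite -resp_indep_first -agree // (negbTE guess_i) (negbTE wrong_i).
Qed.

End FirstPlayerHat.

Section SignallingStrategy.

Variables (n q : nat) (s : strategy n.+1 q) (x0 : 'I_q).

Definition mute_first : strategy n.+1 q :=
  fun i c h => if i == 0 :> nat then None else s i c h.

Definition first_guess (c : config n.+1 q) : 'I_q := odflt x0 (s ord0 c [::]).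

Definition signal_first : strategy n.+1 q :=
  fun i c h => if i == 0 :> nat then
     (if wins mute_first c then None else Some (first_guess c))
   else (if nth None h 0 is None then s i c h else None).

Lemma mute_first_admissible : admissible s -> admissible mute_first.
Proof. by move=> adm i c c' h agr; rewrite /mute_first (adm i c c' h agr). Qed.

Lemma signal_first_admissible : admissible s -> admissible signal_first.
Proof.
move=> adm i c c' h agr; rewrite /signal_first /first_guess.
case: eqP => [i0|_]; last by rewrite (adm i c c' h agr).
have agr0 (j : 'I_n.+1) : 0 < j -> c j = c' j by move=> j0; apply: agr; rewrite i0.
rewrite (@wins_indep_first _ _ _ (mute_first_admissible adm) c c') //.
by rewrite (adm ord0 c c').
Qed.

Lemma wins_signal_first c :
  wins signal_first c = wins mute_first c || (first_guess c == c ord0).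
Proof.
have [W|W] := boolP (wins mute_first c).
  have Eh k : history mute_first c k = history signal_first c k.
    apply: eq_history => i; rewrite /signal_first W /mute_first.
    case: eqP => // /eqP i0.
    by rewrite nth_history0 ?lt0n //= ltnW.
  by rewrite (@eq_wins _ _ _ mute_first c c) ?W // => i; rewrite /resp Eh.
have R i : resp signal_first c i =
    if i == ord0 then Some (first_guess c) else None.
  rewrite respE /signal_first (negbTE W); case: eqP => [i0|/eqP i0].
    by rewrite (_ : i = ord0) ?eqxx //; apply: val_inj.
  rewrite ifN; last by apply: contra i0 => /eqP ->.
  rewrite nth_history0 ?lt0n //=; last exact: ltnW.
  by move/negbTE: W => ->.
rewrite /wins; apply/idP/idP.
  case/andP => /existsP [i]; rewrite R.
  by case: (i =P ord0) => [->|_] // /eqP [->].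
move=> /eqP E; apply/andP; split.
  by apply/existsP; exists ord0; rewrite R eqxx E.
by apply/forallP => i; rewrite R; case: ifP => //= /eqP ->; rewrite E.
Qed.

Lemma wins_signal_first_of_wins c : wins s c -> wins signal_first c.
Proof.
move=> W; rewrite wins_signal_first; case E: (s ord0 c [::]) => [g|].
  move: W; rewrite /wins => /andP [_ /forallP /(_ ord0)].
  by rewrite respE /= E /first_guess E /= => /eqP [->]; rewrite eqxx orbT.
apply/orP; left.
have Eh k : history s c k = history mute_first c k.
  apply: eq_history => i; rewrite /mute_first; case: eqP => // /eqP i0.
  by rewrite (_ : i = ord0); [exact: E | apply/val_inj/eqP].
by rewrite -(@eq_wins _ _ s mute_first c c) // => i; rewrite /resp Eh.
Qed.

Lemma signal_first_wins_indep_first (c : config n.+1 q) : admissible s ->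
  exists2 c' : config n.+1 q,
    (forall j : 'I_n.+1, 0 < j -> c j = c' j) & wins signal_first c'.
Proof.
move=> adm; have [W|W] := boolP (wins mute_first c).
  by exists c => //; rewrite wins_signal_first W.
pose c' : config n.+1 q := [ffun j => if j == ord0 then first_guess c else c j].
have agr (j : 'I_n.+1) : 0 < j -> c j = c' j.
  by rewrite ffunE; case: eqP => // ->.
exists c' => //; rewrite wins_signal_first /first_guess (adm ord0 c' c) => [|j /agr //].
by rewrite ffunE !eqxx orbT.
Qed.

End SignallingStrategy.

Lemma success_prob_lt n q (s t : strategy n q) :
  [set c | wins s c] \proper [set c | wins t c] -> (success_prob s < success_prob t)%R.
Proof.
move=> sub; rewrite /success_prob ltr_pM2r ?ltr_nat ?proper_card //.
rewrite invr_gt0 ltr0n; case/properP: sub => _ [c _ _].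
by apply/card_gt0P; exists c.
Qed.

Theorem lemma4 (n q : nat) (hn : 1 <= n) (hq : 1 < q) (s : strategy n q) :
  optimal s -> restricted s.
Proof.
case: n hn s => [//|n] _ s [adm opt] c i ipos guess_i; apply/eqP.
apply: contraT => wrong_i.
pose x0 : 'I_q := Ordinal (ltnW hq).
have [c' agr win'] := signal_first_wins_indep_first x0 c adm.
have := opt _ (signal_first_admissible x0 adm).
rewrite leNgt success_prob_lt //; apply/properP; split.
  by apply/subsetP => x; rewrite !inE; apply: wins_signal_first_of_wins.
exists c'; rewrite inE //.
exact: (wrong_guess_loses_indep_first adm agr ipos guess_i wrong_i).
Qed.
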